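(* Let $p>3$ be a prime, $e\in\{3,4,6\}$ with $e\mid p+1$, $k\ge1$, $\alpha\in\mathbb{P}^1(\mathbb{Q}_p)$ with $v(\alpha^{-1})\ge0$, and let $g_k(x)=x^{p^{2k}}+\sum_{n=1}^k(-1)^np^n(x^{p^{2k-2n}}+\alpha^{-1}\pi_e^2x^{p^{2k+1-2n}})$. Let $n\in\{0,\dots,k\}$, $a\in\mathbb{C}_p$, and let $\gamma$ be a root of $g_k$ maximising $v(a-\gamma)$ among the roots of $g_k$. If $v(g_k(a))>k-n+\frac{1}{p^2-1}$, then $v(a-\gamma)>\frac{1}{p^{2n}(p^2-1)}$. If moreover $v(g_k(a))\le k-n+1+\frac{1}{p^2-1}$, then $v(a-\gamma)=\frac{1}{p^{2n}}\big(v(g_k(a))-k+n\big)$.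
   Context: $v$ is the $p$-adic valuation on $\mathbb{C}_p$ with $v(p)=1$; $\pi_e\in\overline{\mathbb{Q}}_p$ is a fixed root of $x^e+p$; convention $\alpha^{-1}=0$ if $\alpha=\infty$. *)

From HB Require Import structures.
From mathcomp Require Import all_boot all_order all_algebra.
From mathcomp Require Import reals constructive_ereal ereal.
Set Implicit Arguments. Unset Strict Implicit. Unset Printing Implicit Defensive.
Import Order.TTheory GRing.Theory Num.Theory.
Local Open Scope ring_scope.

(* Axiomatic stand-in for (C_p, v): an algebraically closed field K of
   characteristic 0 with a (rank one, real-valued) valuation
   v : K -> \bar R, v 0 = +oo, normalised by v p = 1, complete for v. *)
Definition is_Cp_valuation (R : realType) (K : closedFieldType) (p : nat)
    (v : K -> \bar R) : Prop :=
  (  ([pchar K] =i pred0) /\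
      (forall x : K, v x = +oo%E <-> x = 0%R) /\
      (forall x : K, v x != -oo%E) /\
      (forall x y : K, v (x * y)%R = (v x + v y)%E) /\
      (forall x y : K, (Order.min (v x) (v y) <= v (x + y)%R)%E) /\
      v (p%:R) = 1%:E /\
      (forall u : nat -> K,
        (forall M : R, exists N : nat, forall i j : nat, (N <= i)%N -> (N <= j)%N ->
            (M%:E < v (u i - u j)%R)%E) ->
        exists l : K, forall M : R, exists N : nat, forall i : nat, (N <= i)%N ->
            (M%:E < v (u i - l)%R)%E)).

(* x lies in Q_p, i.e. in the v-adic closure of Q inside K. *)
Definition in_Qp (R : realType) (K : closedFieldType) (v : K -> \bar R) (x : K) : Prop :=
  forall M : R, exists q : rat, (M%:E < v (x - ratr q)%R)%E.

(* g_k(x) = x^{p^{2k}} + sum_{n=1}^k (-1)^n p^n (x^{p^{2k-2n}} + beta pi^2 x^{p^{2k+1-2n}}),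
   where beta = alpha^{-1}. *)
Definition gk (K : closedFieldType) (p k : nat) (beta pi : K) : {poly K} :=
  'X^(p ^ (2 * k)) +
  \sum_(1 <= n < k.+1)
     ((-1) ^+ n * (p ^ n)%:R) *:
       ('X^(p ^ (2 * k - 2 * n)) + (beta * pi ^+ 2) *: 'X^(p ^ (2 * k + 1 - 2 * n))).

From HB Require Import structures.
From mathcomp Require Import all_boot all_order all_algebra.
From mathcomp Require Import reals constructive_ereal ereal.
From mathcomp Require Import ring lra zify.
Import Order.TTheory GRing.Theory Num.Theory.
Local Open Scope ring_scope.

(* Let gamma be a root of g = g_k (so v gamma >= 0) and v y = t > 0.  Expanding
   g(gamma + y) binomially and bounding v('C(p^a, j)) from below by a - v(j), every
   term has valuation at least min_w ((k - w) + p^(2w) t), and the only term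
   reaching (k - w) + p^(2w) t is (-p)^(k-w) y^(p^(2w)): this is the Newton polygon
   of g(gamma + X), so v(g(gamma + y)) is that minimum whenever it is attained at a
   single w.  Factoring g over the algebraically closed field, the choice of gamma
   as a nearest root to a gives v(g(a)) <= v(g(gamma + y)) whenever
   v(y) >= v(a - gamma).  Letting v(y) decrease to a value t0 >= v(a - gamma)
   through values where the minimum is attained only once (elements of valuation
   1/N exist) gives v(g(a)) <= min_w ((k - w) + p^(2w) t0).  Comparing with the assumed bounds on v(g(a)) places
   v(a - gamma) between the breakpoints 1/(p^(2n)(p^2-1)) and 1/(p^(2n-2)(p^2-1)),
   where the minimum is k - n + p^(2n) v(a - gamma). *)

Lemma exists_argmin_nat {R : realDomainType} (f : nat -> R) (k : nat) :
  exists2 u, (u <= k)%N & forall w, (w <= k)%N -> f u <= f w.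
Proof.
elim: k => [|k [u hu hmin]]; first by exists 0%N => // w; rewrite leqn0 => /eqP ->.
have [hle|hlt] := leP (f u) (f k.+1).
  exists u => [|w]; first exact: leqW.
  by rewrite leq_eqVlt ltnS => /orP [/eqP ->|/hmin].
exists k.+1 => // w; rewrite leq_eqVlt ltnS => /orP [/eqP ->//|/hmin].
by apply: le_trans; apply: ltW.
Qed.

Section NewtonPolygon.
Context {R : realFieldType}.
Variables (Q : R) (k : nat).
Hypothesis Q_gt1 : 1 < Q.

Let Q_gt0 : 0 < Q := lt_trans ltr01 Q_gt1.

(* For Q = p^2, [newton w t] is the valuation of the term (-p)^(k-w) y^(p^(2w)) of
   g_k(gamma + y) when v y = t; [newton w] and [newton w.+1] cross at
   t = [newton_break w]. *)
Definition newton (w : nat) (t : R) : R := (k - w)%:R + Q ^+ w * t.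

Definition newton_break (w : nat) : R := (Q ^+ w * (Q - 1))^-1.

Lemma newton_break_gt0 w : 0 < newton_break w.
Proof. by rewrite invr_gt0 mulr_gt0 ?exprn_gt0 ?subr_gt0. Qed.

Lemma newton_breakXE w : Q ^+ w * newton_break w = newton_break 0.
Proof.
have Qw_neq0 : Q ^+ w != 0 by rewrite expf_neq0 // gt_eqF.
by rewrite /newton_break expr0 mul1r invfM mulrA mulfV ?mul1r.
Qed.

Lemma newton_break_lt {w w'} : (w < w')%N -> newton_break w' < newton_break w.
Proof.
move=> ww'; have Q1 : 0 < Q - 1 by rewrite subr_gt0.
by rewrite ltf_pV2 ?posrE ?mulr_gt0 ?exprn_gt0 // ltr_pM2r // ltr_eXn2l.
Qed.

Lemma newton_break_le {w w'} : (w <= w')%N -> newton_break w' <= newton_break w.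
Proof. by rewrite leq_eqVlt => /predU1P [->|/newton_break_lt/ltW]. Qed.

Lemma newton_succ w t :
  (w < k)%N -> newton w.+1 t = newton w t + (Q ^+ w * (Q - 1) * t - 1).
Proof. by move=> wk; rewrite /newton (natrB _ wk) (natrB _ (ltnW wk)) exprS -natr1; ring. Qed.

Lemma newton_succ_le w t :
  (w < k)%N -> (newton w t <= newton w.+1 t) = (newton_break w <= t).
Proof.
move=> wk; have c_gt0 : 0 < Q ^+ w * (Q - 1) by rewrite mulr_gt0 ?exprn_gt0 ?subr_gt0.
by rewrite newton_succ // lerDl subr_ge0 /newton_break -[_^-1]mulr1 ler_pdivrMl // mulrA.
Qed.

Lemma newton_succ_lt w t :
  (w < k)%N -> (newton w t < newton w.+1 t) = (newton_break w < t).
Proof.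
move=> wk; have c_gt0 : 0 < Q ^+ w * (Q - 1) by rewrite mulr_gt0 ?exprn_gt0 ?subr_gt0.
by rewrite newton_succ // ltrDl subr_gt0 /newton_break -[_^-1]mulr1 ltr_pdivrMl // mulrA.
Qed.

Lemma newton_ge_right u w t :
  (u <= w <= k)%N -> newton_break u <= t -> newton u t <= newton w t.
Proof.
move=> /andP [uw wk] ut; elim: w uw wk => [|w ih]; first by rewrite leqn0 => /eqP ->.
rewrite leq_eqVlt ltnS => /predU1P [-> //|uw] wk.
apply: le_trans (ih uw (ltnW wk)) _; rewrite newton_succ_le //.
exact: le_trans (newton_break_le uw) ut.
Qed.

Lemma newton_gt_right u w t :
  (u < w <= k)%N -> newton_break u < t -> newton u t < newton w t.
Proof.
move=> /andP [uw wk] ut; have uk : (u < k)%N := leq_trans uw wk.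
apply: (@lt_le_trans _ _ (newton u.+1 t)); first by rewrite newton_succ_lt.
apply: newton_ge_right; first by rewrite uw.
exact/ltW/(lt_trans (newton_break_lt (ltnSn u))).
Qed.

Lemma newton_ge_left u w t : (w <= u <= k)%N ->
  ((0 < u)%N -> t <= newton_break u.-1) -> newton u t <= newton w t.
Proof.
move=> /andP [wu uk] tu; elim: u wu uk tu => [|u ih]; first by rewrite leqn0 => /eqP ->.
rewrite leq_eqVlt ltnS => /predU1P [-> //|wu] uk /(_ isT) /= tu.
apply: (@le_trans _ _ (newton u t)); first by rewrite leNgt newton_succ_lt // -leNgt.
apply: ih wu (ltnW uk) _.
by case: u {uk} tu => // u tu _; apply: le_trans tu (newton_break_le _).
Qed.

Lemma newton_gt_left u w t :
  (w < u <= k)%N -> t < newton_break u.-1 -> newton u t < newton w t.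
Proof.
case: u => // u /andP [wu uk] tu.
apply: (@lt_le_trans _ _ (newton u t)); first by rewrite ltNge newton_succ_le // -ltNge.
apply: newton_ge_left; first by rewrite -ltnS wu ltnW.
by case: u {wu uk} tu => // u tu _; apply/ltW/(lt_le_trans tu (newton_break_le _)).
Qed.

Lemma newton_argmin u t : (u <= k)%N -> newton_break u <= t ->
  ((0 < u)%N -> t <= newton_break u.-1) ->
  forall w, (w <= k)%N -> newton u t <= newton w t.
Proof.
move=> uk tr tl w wk; have [uw|wu] := leqP u w; first by rewrite newton_ge_right ?uw.
by rewrite newton_ge_left // ltnW ?wu.
Qed.

Lemma newton_argmin_uniq u t : (u <= k)%N -> newton_break u < t ->
  ((0 < u)%N -> t < newton_break u.-1) ->
  forall w, (w <= k)%N -> w != u -> newton u t < newton w t.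
Proof.
move=> uk tr tl w wk; case: (ltngtP u w) => [uw|wu|->]; last by move=> /eqP.
  by rewrite newton_gt_right ?uw.
have u0 : (0 < u)%N := leq_ltn_trans (leq0n w) wu.
by rewrite newton_gt_left ?wu ?tl.
Qed.

Lemma newton_at_break u : newton u (newton_break u) = (k - u)%:R + newton_break 0.
Proof. by rewrite /newton newton_breakXE. Qed.

Lemma newton_gt_of_break_lt m t : 2 < Q -> (0 < m <= k)%N ->
  newton_break m.-1 < t ->
  forall w, (w <= k)%N -> (k - m + 1)%:R + newton_break 0 < newton w t.
Proof.
move=> Q_gt2 /andP [m0 mk] tm w wk.
have km : (k - m + 1 = k - m.-1)%N by lia.
have [mw|wm] := leqP m.-1 w.
  apply: (@lt_le_trans _ _ (newton m.-1 t)); last by rewrite newton_ge_right ?mw ?ltW.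
  by rewrite /newton km ltrD2l -(newton_breakXE m.-1) ltr_pM2l ?exprn_gt0.
have break0_lt1 : newton_break 0 < 1.
  by rewrite /newton_break expr0 mul1r invf_lt1 ?subr_gt0 // ltrBrDr.
have t0 : 0 < t := lt_trans (newton_break_gt0 _) tm.
have Qw_t : 0 < Q ^+ w * t by rewrite mulr_gt0 ?exprn_gt0.
have : ((k - m + 1)%:R : R) + 1 <= (k - w)%:R by rewrite natr1 ler_nat; lia.
rewrite /newton; lra.
Qed.

Lemma newton_le_nat w (A J : nat) t : 0 < t -> (k - w <= A)%N -> Q ^+ w <= J%:R ->
  newton w t <= A%:R + J%:R * t.
Proof. by move=> t0 wA QJ; rewrite /newton lerD ?ler_nat // ler_pM2r. Qed.

Lemma newton_lt_nat w (A J : nat) t : 0 < t -> (k - w <= A)%N -> Q ^+ w <= J%:R ->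
  (k - w < A)%N || (Q ^+ w < J%:R) -> newton w t < A%:R + J%:R * t.
Proof.
move=> t0 wA QJ /orP [wA'|QJ']; rewrite /newton.
  by rewrite ltr_leD ?ltr_nat // ler_pM2r.
by rewrite ler_ltD ?ler_nat // ltr_pM2r.
Qed.

End NewtonPolygon.

Lemma newton_break_nat {R : realFieldType} (q m : nat) : (0 < q)%N ->
  ((q ^ (2 * m) * (q ^ 2 - 1))%:R : R)^-1 = newton_break (q ^ 2)%:R m.
Proof.
by move=> q_gt0; rewrite /newton_break natrM expnM (natrX _ (q ^ 2)) natrB // expn_gt0 q_gt0.
Qed.

Lemma exprD_subr_binom (S : comPzRingType) (g y : S) N :
  (g + y) ^+ N - g ^+ N = \sum_(i < N) g ^+ (N - i.+1) * y ^+ i.+1 *+ 'C(N, i.+1).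
Proof.
rewrite exprDn big_ord_recl /= subn0 expr0 mulr1 bin0 mulr1n addrC addKr.
by apply: eq_bigr => i _; rewrite /bump add1n.
Qed.

Lemma logn_bin_pfactor p a j : prime p -> (0 < j <= p ^ a)%N ->
  (a <= logn p 'C(p ^ a, j) + logn p j)%N.
Proof.
move=> p_pr /andP [j0 ja]; have pa0 : (0 < p ^ a)%N by rewrite expn_gt0 prime_gt0.
have := congr1 (logn p) (mul_bin_diag (p ^ a) j.-1); rewrite prednK //.
have ja' : (j.-1 <= (p ^ a).-1)%N by rewrite -ltnS !prednK.
rewrite !lognM ?bin_gt0 ?pfactorK // => h.
by rewrite addnC -h leq_addr.
Qed.

Section Valuation.
Context {R : realType} {K : closedFieldType} {v : K -> \bar R} {p : nat}.
Hypothesis hv : is_Cp_valuation p v.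

Lemma v_eqy x : v x = +oo%E <-> x = 0.
Proof. by case: hv => _ [h _]. Qed.

Lemma v_neqNy x : v x != -oo%E.
Proof. by case: hv => _ [_ [h _]]. Qed.

Lemma vM x y : v (x * y) = (v x + v y)%E.
Proof. by case: hv => _ [_ [_ [h _]]]. Qed.

Lemma vD_ge_min x y : (Order.min (v x) (v y) <= v (x + y))%E.
Proof. by case: hv => _ [_ [_ [_ [h _]]]]. Qed.

Lemma v_natp : v p%:R = 1%:E.
Proof. by case: hv => _ [_ [_ [_ [_ [h _]]]]]. Qed.

Lemma v0 : v 0 = +oo%E.
Proof. exact/v_eqy. Qed.

Lemma v_fin {x : K} : x != 0 -> exists r : R, v x = r%:E.
Proof.
move=> x0; exists (fine (v x)); rewrite fineK // fin_numE v_neqNy /=.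
by apply: contra x0 => /eqP /v_eqy ->.
Qed.

Lemma v1 : v 1 = 0%E.
Proof.
have [r hr] := v_fin (oner_neq0 K).
have := vM 1 1; rewrite mulr1 hr -EFinD => -[h].
by congr (_%:E); lra.
Qed.

Lemma vN1 : v (-1) = 0%E.
Proof.
have [r hr] : exists r : R, v (-1) = r%:E by apply: v_fin; rewrite oppr_eq0 oner_neq0.
have := vM (-1) (-1); rewrite mulrNN mulr1 v1 hr -EFinD => -[h].
by congr (_%:E); lra.
Qed.

Lemma vN x : v (- x) = v x.
Proof. by rewrite -mulN1r vM vN1 add0e. Qed.

Lemma vD_ge (z : \bar R) x y : (z <= v x)%E -> (z <= v y)%E -> (z <= v (x + y))%E.
Proof. by move=> hx hy; apply: le_trans (vD_ge_min x y); rewrite le_min hx hy. Qed.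

Lemma vD_gt (z : \bar R) x y : (z < v x)%E -> (z < v y)%E -> (z < v (x + y))%E.
Proof. by move=> hx hy; apply: lt_le_trans (vD_ge_min x y); rewrite lt_min hx hy. Qed.

Lemma vsum_ge (I : Type) (s : seq I) (P : pred I) (F : I -> K) (z : \bar R) :
  (forall i, P i -> (z <= v (F i))%E) -> (z <= v (\sum_(i <- s | P i) F i))%E.
Proof. by move=> hF; elim/big_ind: _ => //; [rewrite v0 leey | apply: vD_ge]. Qed.

Lemma vsum_gt (I : Type) (s : seq I) (P : pred I) (F : I -> K) (z : R) :
  (forall i, P i -> (z%:E < v (F i))%E) -> (z%:E < v (\sum_(i <- s | P i) F i))%E.
Proof. by move=> hF; elim/big_ind: _ => //; [rewrite v0 ltry | apply: vD_gt]. Qed.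

Lemma vD_eq x y (r : R) : v x = r%:E -> (r%:E < v y)%E -> v (x + y) = r%:E.
Proof.
move=> hx hy; apply/eqP; rewrite eq_le; apply/andP; split; last first.
  by rewrite -hx vD_ge // hx ltW.
rewrite leNgt; apply/negP => hxy; have : (r%:E < v (x + y - y))%E by apply: vD_gt; rewrite ?vN.
by rewrite addrK hx ltxx.
Qed.

Lemma vsum_eq (I : eqType) (s : seq I) (F : I -> K) (i0 : I) (r : R) :
  uniq s -> i0 \in s -> v (F i0) = r%:E ->
  (forall i, i \in s -> i != i0 -> (r%:E < v (F i))%E) ->
  v (\sum_(i <- s) F i) = r%:E.
Proof.
move=> s_uniq s_i0 hi0 hF; rewrite (bigD1_seq i0) //=; apply: vD_eq => //.
by rewrite big_seq_cond; apply: vsum_gt => i /andP [/hF].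
Qed.

Lemma vM_gt (r s : R) x y :
  (r%:E < v x)%E -> (s%:E <= v y)%E -> ((r + s)%:E < v (x * y))%E.
Proof.
move=> hx hy; rewrite vM EFinD.
have [->|y0] := eqVneq y 0; first by rewrite v0 addey ?ltry ?v_neqNy.
by apply: lte_leD.
Qed.

Lemma vX_ge {x} {r : R} n : (r%:E <= v x)%E -> ((n%:R * r)%:E <= v (x ^+ n))%E.
Proof.
move=> hx; elim: n => [|n ih]; first by rewrite expr0 v1 mul0r.
by rewrite exprS mulrSr mulrDl mul1r addrC vM EFinD leeD.
Qed.

Lemma vX {x} {r : R} n : v x = r%:E -> v (x ^+ n) = (n%:R * r)%:E.
Proof.
move=> hx; elim: n => [|n ih]; first by rewrite expr0 v1 mul0r.
by rewrite exprS vM hx ih -EFinD mulrSr mulrDl mul1r addrC.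
Qed.

Lemma vX_ge0 x n : (0 <= v x)%E -> (0 <= v (x ^+ n))%E.
Proof. by move=> /(vX_ge n); rewrite mulr0. Qed.

Lemma vMX_lt (d x : K) (r : R) (M N : nat) : (0 <= v d)%E -> v x = r%:E -> r < 0 ->
  (M < N)%N -> ((N%:R * r)%:E < v (d * x ^+ M))%E.
Proof.
move=> d_ge0 hx r_lt0 MN; rewrite vM (vX _ hx) -[X in (X < _)%E]add0e.
by apply: lee_ltD => //; rewrite lte_fin ltr_nM2r // ltr_nat.
Qed.

Lemma v_signr n : v ((-1) ^+ n) = 0%E.
Proof. by rewrite (vX _ vN1) mulr0. Qed.

Lemma v_expnp n : v (p ^ n)%:R = n%:R%:E.
Proof. by rewrite natrX (vX _ v_natp) mulr1. Qed.

Lemma v_nat_ge0 n : (0 <= v n%:R)%E.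
Proof.
elim: n => [|n ih]; first by rewrite v0 leey.
by rewrite -natr1 vD_ge // v1.
Qed.

Lemma logn_le_v_nat n : ((logn p n)%:R%:E <= v n%:R)%E.
Proof.
rewrite -[in v _](divnK (pfactor_dvdnn p n)) natrM vM v_expnp.
by rewrite -[X in (X <= _)%E]add0e leeD ?v_nat_ge0.
Qed.

Lemma exists_v_inv_nat N : (0 < N)%N -> exists w : K, v w = (N%:R^-1 : R)%:E.
Proof.
move=> N0; have : size ('X^N - (p%:R : K)%:P) != 1%N.
  by rewrite size_XnsubC // eqSS -lt0n.
move=> /closed_rootP [w]; rewrite rootE !hornerE subr_eq0 => /eqP wN.
have [w0|w_neq0] := eqVneq w 0.
  by move: v_natp; rewrite -wN w0 expr0n -(prednK N0) v0.
have [r hr] := v_fin w_neq0; exists w; rewrite hr.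
have := congr1 v wN; rewrite v_natp (vX _ hr) => -[hN]; congr (_%:E).
have N_neq0 : (N%:R : R) != 0 by rewrite pnatr_eq0 -lt0n.
by apply: (mulfI N_neq0); rewrite hN mulfV.
Qed.

Lemma exists_v_small (d : R) : 0 < d -> exists s : R, [/\ 0 < s, s < d & exists w, v w = s%:E].
Proof.
move=> d0; have [n hn] := ltr_add_invr d0; rewrite add0r in hn.
by exists n.+1%:R^-1; split; rewrite ?invr_gt0 //; exact: exists_v_inv_nat.
Qed.

Lemma v_gt0_of_expr_eq_Np {z : K} {e : nat} : (0 < e)%N -> z ^+ e = - p%:R -> (0 < v z)%E.
Proof.
move=> e0 hz; have [z0|z_neq0] := eqVneq z 0.
  by move: v_natp; rewrite -vN -hz z0 expr0n -(prednK e0) v0.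
have [r hr] := v_fin z_neq0; rewrite hr lte_fin.
have := congr1 v hz; rewrite vN v_natp (vX _ hr) => -[er].
have e_gt0 : (0 : R) < e%:R by rewrite ltr0n.
by rewrite -(pmulr_rgt0 _ e_gt0) er.
Qed.

Lemma v_horner_le_nearest_root {P : {poly K}} {a gam y : K} :
  (forall d, root P d -> (v (a - d) <= v (a - gam))%E) ->
  (v (a - gam) <= v y)%E -> (v P.[a] <= v P.[gam + y])%E.
Proof.
move=> nearest hy; have [rs defP] := closed_field_poly_normal P.
rewrite defP !hornerZ !horner_prod !vM leeD // !(big_morph v vM v1) !big_seq.
apply: lee_sum => z rs_z; rewrite !hornerXsubC.
have : (v (a - z) <= v (a - gam))%E.
  apply: nearest; rewrite /root defP hornerZ.
  by move: (root_prod_XsubC rs z); rewrite rs_z /root => /eqP ->; rewrite mulr0.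
have -> : gam + y - z = (a - z) + (y - (a - gam)) by ring.
by move=> hz; rewrite vD_ge // vD_ge ?vN // (le_trans hz).
Qed.

Section Gk.
Hypothesis p_pr : prime p.
Context {k : nat} {beta pi : K}.
Hypotheses (v_beta_ge0 : (0 <= v beta)%E) (v_pi_gt0 : (0 < v pi)%E).

Local Notation g := (gk p k beta pi).
Local Notation Q := ((p ^ 2)%:R : R).
Let c n : K := (-1) ^+ n * (p ^ n)%:R.
Let b : K := beta * pi ^+ 2.
Let T (x y : K) (a i : nat) : K := x ^+ (p ^ a - i.+1) * y ^+ i.+1 *+ 'C(p ^ a, i.+1).

Lemma v_twist_gt0 : (0 < v b)%E.
Proof. by rewrite -[0%E]adde0 vM lee_ltD // expr2 vM adde_gt0. Qed.

Lemma p2_gt2 : 2 < Q.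
Proof. by rewrite ltr_nat -mulnn; have := prime_gt1 p_pr; nia. Qed.

Lemma p2_gt1 : 1 < Q.
Proof. by apply: lt_trans p2_gt2; rewrite ltr1n. Qed.

Lemma v_gk_coef n : v (c n) = n%:R%:E.
Proof. by rewrite vM v_signr v_expnp add0e. Qed.

Lemma horner_gk x : g.[x] =
  \sum_(0 <= n < k.+1) c n * x ^+ (p ^ (k - n).*2) +
  \sum_(1 <= n < k.+1) (c n * b) * x ^+ (p ^ (k - n).*2.+1).
Proof.
rewrite /gk hornerD hornerXn horner_sum [X in _ = X + _]big_ltn // /c.
rewrite expr0 mul1r subn0 -mul2n mul1r -addrA; congr (_ + _).
rewrite -big_split; apply: eq_big_nat => n /andP [_ nk].
have -> : (2 * k - 2 * n = (k - n).*2)%N by lia.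
have -> : (2 * k + 1 - 2 * n = (k - n).*2.+1)%N by lia.
by rewrite hornerZ hornerD hornerZ !hornerXn mulrDr mulrA.
Qed.

Lemma horner_gk_shift x y : root g x -> g.[x + y] =
  \sum_(0 <= n < k.+1) c n * \sum_(i < p ^ (k - n).*2) T x y (k - n).*2 i +
  \sum_(1 <= n < k.+1) (c n * b) * \sum_(i < p ^ (k - n).*2.+1) T x y (k - n).*2.+1 i.
Proof.
move=> /eqP gx; rewrite -[LHS]subr0 -[in LHS]gx !horner_gk opprD addrACA -!sumrB.
by congr (_ + _); apply: eq_bigr => n _; rewrite -mulrBr exprD_subr_binom.
Qed.

Lemma v_gk_root_ge0 x : root g x -> (0 <= v x)%E.
Proof.
move=> gx; rewrite leNgt; apply/negP => x_lt0.
have [r hr] : exists r : R, v x = r%:E.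
  by apply: v_fin; apply: contraTneq x_lt0 => ->; rewrite v0.
have r_lt0 : r < 0 by rewrite -lte_fin -hr.
have pk_gt k' : (k' < k.*2)%N -> (p ^ k' < p ^ k.*2)%N by rewrite ltn_exp2l ?prime_gt1.
have c_ge0 n : (0 <= v (c n))%E by rewrite v_gk_coef lee_fin.
move: gx; rewrite /root horner_gk big_ltn // /c expr0 expn0 !mul1r subn0 -addrA => /eqP.
move=> /(congr1 v); rewrite v0 (@vD_eq _ _ ((p ^ k.*2)%:R * r)) ?(vX _ hr) //.
apply: vD_gt; rewrite big_nat; apply: vsum_gt => n /andP [n0 nk];
  apply: vMX_lt => //; rewrite ?pk_gt //; try lia.
- exact: c_ge0.
- by rewrite vM; apply: adde_ge0; [exact: c_ge0 | exact: ltW v_twist_gt0].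
Qed.

Section Shift.
Context {x y : K} {t : R}.
Hypotheses (gx : root g x) (hy : v y = t%:E) (t_gt0 : 0 < t).

Lemma v_binom_term_ge a i :
  (((logn p 'C(p ^ a, i.+1))%:R + i.+1%:R * t)%:E <= v (T x y a i))%E.
Proof.
rewrite /T -[_ *+ 'C(_, _)]mulr_natr vM addrC EFinD leeD ?logn_le_v_nat //.
by rewrite vM (vX _ hy) -[X in (X <= _)%E]add0e leeD // vX_ge0 // v_gk_root_ge0.
Qed.

Lemma v_coef_binom_term_ge n {a i} :
  ((k - n).*2 <= a <= (k - n).*2.+1)%N -> (i < p ^ a)%N ->
  exists w, [/\ (w <= k)%N, ((newton Q k w t)%:E <= v (c n * T x y a i))%E &
    a = (k - n).*2 -> (i.+1 != p ^ a)%N -> ((newton Q k w t)%:E < v (c n * T x y a i))%E].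
Proof.
move=> /andP [ka ak] ia; set s := logn p i.+1; set lC := logn p 'C(p ^ a, i.+1).
have pj : (p ^ s <= i.+1)%N by apply: dvdn_leq => //; apply: pfactor_dvdnn.
have sa : (s <= a)%N by rewrite -(leq_exp2l _ _ (prime_gt1 p_pr)) (leq_trans pj).
have aC : (a <= lC + s)%N by apply: logn_bin_pfactor.
have Qw : Q ^+ s./2 = (p ^ (s./2).*2)%:R by rewrite -natrX -expnM mul2n.
have pw : (p ^ (s./2).*2 <= p ^ s)%N.
  by rewrite leq_exp2l ?prime_gt1 // -{2}(odd_double_half s) leq_addl.
have bound : (((n + lC)%:R + i.+1%:R * t)%:E <= v (c n * T x y a i))%E.
  by rewrite natrD -addrA EFinD vM v_gk_coef leeD // v_binom_term_ge.
exists s./2; split; first by lia.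
  apply: le_trans bound; rewrite lee_fin newton_le_nat //; first by lia.
  by rewrite Qw ler_nat (leq_trans pw pj).
move=> a_even j_neq; apply: lt_le_trans bound; rewrite lte_fin newton_lt_nat //.
- by lia.
- by rewrite Qw ler_nat (leq_trans pw pj).
rewrite Qw ltr_nat; have [_|jp] := ltnP (p ^ (s./2).*2)%N i.+1; first by rewrite orbT.
rewrite orbF.
have js : i.+1 = (p ^ (s./2).*2)%N by apply/eqP; rewrite eqn_leq jp (leq_trans pw pj).
have s_eq : s = (s./2).*2 by rewrite {1}/s js pfactorK.
have : (s./2).*2 != a by apply/eqP => sa2; rewrite js sa2 eqxx in j_neq.
by lia.
Qed.

Lemma v_coef_twist_binom_term_gt {n i} : (n <= k)%N -> (i < p ^ (k - n).*2.+1)%N ->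
  exists2 w, (w <= k)%N & ((newton Q k w t)%:E < v (c n * b * T x y (k - n).*2.+1 i))%E.
Proof.
move=> nk ia; have [|w [wk hw _]] := v_coef_binom_term_ge n _ ia; first by rewrite leqnSn leqnn.
by exists w => //; rewrite mulrAC mulrC -[newton _ _ _ _]add0r vM_gt // v_twist_gt0.
Qed.

Lemma v_coef_binom_vertex n : (n <= k)%N ->
  v (c n * T x y (k - n).*2 (p ^ (k - n).*2).-1) = (newton Q k (k - n) t)%:E.
Proof.
move=> nk; rewrite /T prednK ?expn_gt0 ?prime_gt0 // subnn expr0 mul1r binn mulr1n.
by rewrite vM v_gk_coef (vX _ hy) -EFinD /newton subKn // -mul2n expnM natrX.
Qed.

Lemma v_gk_shift_ge : exists2 w, (w <= k)%N & ((newton Q k w t)%:E <= v g.[x + y])%E.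
Proof.
have [u uk u_min] := exists_argmin_nat (fun w => newton Q k w t) k.
exists u => //; rewrite horner_gk_shift // vD_ge // big_nat; apply: vsum_ge => n /andP [_ nk];
  rewrite mulr_sumr; apply: vsum_ge => i _.
- have [|w [wk hw _]] := v_coef_binom_term_ge n _ (ltn_ord i); first by rewrite leqnn leqnSn.
  by apply: le_trans hw; rewrite lee_fin u_min.
- have [w wk hw] := v_coef_twist_binom_term_gt nk (ltn_ord i).
  by apply/ltW/(le_lt_trans _ hw); rewrite lee_fin u_min.
Qed.

Lemma v_gk_shift_eq u : (u <= k)%N ->
  (forall w, (w <= k)%N -> w != u -> newton Q k u t < newton Q k w t) ->
  v g.[x + y] = (newton Q k u t)%:E.
Proof.
move=> uk u_uniq; have u_min w : (w <= k)%N -> ((newton Q k u t)%:E <= (newton Q k w t)%:E)%E.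
  by move=> wk; rewrite lee_fin; have [->|/(u_uniq _ wk)/ltW] := eqVneq w u.
have even_gt n i : (n <= k)%N -> (i < p ^ (k - n).*2)%N ->
    ~~ ((n == k - u) && (i.+1 == p ^ (k - n).*2))%N ->
    ((newton Q k u t)%:E < v (c n * T x y (k - n).*2 i))%E.
  move=> nk ia not_vertex.
  have [|w [wk _ hw]] := v_coef_binom_term_ge n _ ia; first by rewrite leqnn leqnSn.
  have [vertex|j_neq] := eqVneq i.+1 (p ^ (k - n).*2)%N; last first.
    exact: le_lt_trans (u_min _ wk) (hw erefl j_neq).
  have -> : i = (p ^ (k - n).*2).-1 by rewrite -vertex.
  rewrite v_coef_binom_vertex // lte_fin u_uniq ?leq_subr //.
  by apply: contra not_vertex => /eqP ku; rewrite vertex eqxx andbT -ku subKn.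
have vertex_lt : ((p ^ (k - (k - u)).*2).-1 < p ^ (k - (k - u)).*2)%N.
  by rewrite ltn_predL expn_gt0 prime_gt0.
rewrite horner_gk_shift //; apply: vD_eq; last first.
  rewrite big_nat; apply: vsum_gt => n /andP [_ nk]; rewrite mulr_sumr.
  apply: vsum_gt => i _; have [w wk hw] := v_coef_twist_binom_term_gt nk (ltn_ord i).
  exact: le_lt_trans (u_min _ wk) hw.
apply: (@vsum_eq _ _ _ (k - u)%N); [exact: iota_uniq | by rewrite mem_index_iota; lia | |].
  rewrite mulr_sumr; apply: (@vsum_eq _ _ _ (Ordinal vertex_lt)).
  - exact: index_enum_uniq.
  - exact: mem_index_enum.
  - by rewrite v_coef_binom_vertex ?leq_subr // subKn.
  move=> i _ i_neq; apply: even_gt => //; first exact: leq_subr.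
  rewrite eqxx /=; apply: contra i_neq => /eqP i_eq; apply/eqP/val_inj.
  exact: (congr1 predn i_eq).
move=> n; rewrite mem_index_iota => /andP [_ nk] n_neq; rewrite mulr_sumr.
by apply: vsum_gt => i _; apply: even_gt => //; rewrite (negPf n_neq).
Qed.

End Shift.

Lemma v_gk_le_newton_strict {a gam z : K} {u} {t0 : R} :
  root g gam -> (forall d, root g d -> (v (a - d) <= v (a - gam))%E) ->
  (u <= k)%N -> v z = t0%:E -> (v (a - gam) <= t0%:E)%E ->
  newton_break Q u <= t0 -> ((0 < u)%N -> t0 < newton_break Q u.-1) ->
  (v g.[a] <= (newton Q k u t0)%:E)%E.
Proof.
(* For t slightly above t0, u is the unique minimiser of [newton _ t], so
   v g.[a] <= newton u t by nearness of gam; then let t decrease to t0. *)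
move=> g_gam nearest uk hz near_t0 tr tl.
have t0_gt0 : 0 < t0 := lt_le_trans (newton_break_gt0 _ p2_gt1 u) tr.
have [d d_gt0 hd] : exists2 d, 0 < d & (0 < u)%N -> t0 + d < newton_break Q u.-1.
  have [->|u_gt0] := posnP u; first by exists 1.
  exists ((newton_break Q u.-1 - t0) / 2) => [|_]; have := tl u_gt0; lra.
have Qu_gt0 : 0 < Q ^+ u by rewrite exprn_gt0 // (lt_trans ltr01 p2_gt1).
apply/lee_addgt0Pr => e e_gt0.
have [|s [s_gt0 + [w hw]]] := exists_v_small (Num.min d (e / Q ^+ u)).
  by rewrite lt_min d_gt0 divr_gt0.
rewrite lt_min => /andP [sd se].
have hzw : v (z * w) = (t0 + s)%:E by rewrite vM hz hw.
apply: le_trans (v_horner_le_nearest_root (y := z * w) nearest _) _.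
  by rewrite hzw (le_trans near_t0) // lee_fin lerDl ltW.
rewrite (v_gk_shift_eq g_gam hzw _ _ uk) ?addr_gt0 //; last first.
  apply: newton_argmin_uniq _ _ p2_gt1 _ _ uk _ _; first by rewrite (le_lt_trans tr) // ltrDl.
  by move=> u_gt0; apply: le_lt_trans (hd u_gt0); rewrite lerD2l ltW.
by rewrite lee_fin /newton mulrDr addrA lerD2l ltW // -ltr_pdivlMl // mulrC.
Qed.

Lemma v_gk_le_newton {a gam z : K} {u} {t0 : R} :
  root g gam -> (forall d, root g d -> (v (a - d) <= v (a - gam))%E) ->
  (u <= k)%N -> v z = t0%:E -> (v (a - gam) <= t0%:E)%E ->
  newton_break Q u <= t0 -> ((0 < u)%N -> t0 <= newton_break Q u.-1) ->
  (v g.[a] <= (newton Q k u t0)%:E)%E.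
Proof.
move=> g_gam nearest uk hz near_t0 tr tl.
have strict := v_gk_le_newton_strict g_gam nearest _ hz near_t0.
have [u0|u_gt0] := posnP u; first by apply: strict => //; rewrite u0.
have [tl_lt|tl_ge] := ltrP t0 (newton_break Q u.-1); first exact: strict.
have tl_eq : t0 = newton_break Q u.-1 by apply/eqP; rewrite eq_le tl.
have break_lt : (0 < u.-1)%N -> t0 < newton_break Q u.-2.
  move=> u1; rewrite tl_eq; apply: (newton_break_lt _ p2_gt1).
  by case: (u) u1 => [|[|w]].
have u1k : (u.-1 <= k)%N := leq_trans (leq_pred u) uk.
apply: le_trans (strict u.-1 u1k _ break_lt) _; first by rewrite tl_eq.
rewrite lee_fin (newton_argmin _ _ p2_gt1 _ _ u1k) ?tl_eq //.
by rewrite -tl_eq => /break_lt /ltW.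
Qed.

Lemma v_gk_le_at_break {a gam : K} {m} : (m <= k)%N ->
  root g gam -> (forall d, root g d -> (v (a - d) <= v (a - gam))%E) ->
  (v (a - gam) <= (newton_break Q m)%:E)%E ->
  (v g.[a] <= ((k - m)%:R + newton_break Q 0)%:E)%E.
Proof.
move=> mk g_gam nearest near.
have [|z hz] := exists_v_inv_nat (p ^ (2 * m) * (p ^ 2 - 1)).
  by rewrite muln_gt0 expn_gt0 prime_gt0 //= subn_gt0 -(ltr_nat R) p2_gt1.
rewrite newton_break_nat ?prime_gt0 // in hz.
rewrite -(newton_at_break _ _ p2_gt1); apply: (v_gk_le_newton g_gam nearest mk hz) => // _.
exact: (newton_break_le _ p2_gt1 (leq_pred m)).
Qed.

Lemma v_gk_eq_newton {a gam : K} {m} {d : R} : (m <= k)%N ->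
  root g gam -> (forall d, root g d -> (v (a - d) <= v (a - gam))%E) ->
  v (a - gam) = d%:E -> newton_break Q m < d ->
  (v g.[a] <= ((k - m + 1)%:R + newton_break Q 0)%:E)%E ->
  v g.[a] = (newton Q k m d)%:E.
Proof.
move=> mk g_gam nearest hd md G_le.
have d_gt0 : 0 < d := lt_trans (newton_break_gt0 _ p2_gt1 m) md.
have [w wk G_ge] := v_gk_shift_ge g_gam hd d_gt0; rewrite addrC subrK in G_ge.
have dm : (0 < m)%N -> d <= newton_break Q m.-1.
  move=> m_gt0; rewrite leNgt; apply: contraTN G_le => dm.
  rewrite -ltNge (lt_le_trans _ G_ge) // lte_fin.
  by apply: (newton_gt_of_break_lt _ _ p2_gt1); rewrite ?m_gt0 ?p2_gt2.
apply/eqP; rewrite eq_le (v_gk_le_newton g_gam nearest mk hd) ?hd ?(ltW md) //=.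
apply: le_trans G_ge; rewrite lee_fin.
exact: newton_argmin _ _ p2_gt1 _ _ mk (ltW md) dm _ wk.
Qed.

End Gk.
End Valuation.

Theorem mainTheorem17 (R : realType) (K : closedFieldType) (v : K -> \bar R)
  (p : nat) (hv : is_Cp_valuation p v) (hp : prime p) (hp3 : (3 < p)%N)
  (e : nat) (he : e \in [:: 3; 4; 6]%N) (hdiv : (e %| p.+1)%N)
  (pi : K) (hpi : pi ^+ e = - (p%:R))
  (k : nat) (hk : (1 <= k)%N)
  (beta : K) (hbetaQ : in_Qp v beta) (hbeta : (0%E <= v beta)%O)
  (m : nat) (hm : (m <= k)%N) (a gamma : K)
  (hroot : root (gk p k beta pi) gamma)
  (hmax : forall d : K, root (gk p k beta pi) d -> (v (a - d) <= v (a - gamma))%O) :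
  (((k - m)%:R + ((p ^ 2 - 1)%:R)^-1 : R)%:E < v (gk p k beta pi).[a])%O ->
  (((((p ^ (2 * m)) * (p ^ 2 - 1))%:R)^-1 : R)%:E < v (a - gamma))%O /\
  ((v (gk p k beta pi).[a] <= ((k - m + 1)%:R + ((p ^ 2 - 1)%:R)^-1 : R)%:E)%O ->
   v (a - gamma) = ((v (gk p k beta pi).[a] - ((k - m)%:R : R)%:E)
                     * ((((p ^ (2 * m))%:R)^-1 : R))%:E)%E).
Proof.
have e_gt0 : (0 < e)%N by move: he; rewrite !inE => /or3P [] /eqP ->.
have v_pi := v_gt0_of_expr_eq_Np hv e_gt0 hpi.
have p_gt0 := prime_gt0 hp.
have break0 : ((p ^ 2 - 1)%:R : R)^-1 = newton_break (p ^ 2)%:R 0.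
  by rewrite -newton_break_nat // muln0 expn0 mul1n.
have Qm : ((p ^ (2 * m))%:R : R) = (p ^ 2)%:R ^+ m by rewrite expnM natrX.
rewrite break0 newton_break_nat // Qm => hG.
have near : ((newton_break (p ^ 2)%:R m)%:E < v (a - gamma)%R)%E.
  rewrite ltNge; apply: contraTN hG => /(v_gk_le_at_break hv hp hbeta v_pi hm hroot hmax).
  by rewrite -leNgt.
split=> // hG_le.
have [d hd] : exists d : R, v (a - gamma) = d%:E.
  apply: (v_fin hv); apply: contraTneq hG_le => /subr0_eq ->.
  by rewrite (rootP hroot) (v0 hv) leNgt ltry.
rewrite hd lte_fin in near.
rewrite (v_gk_eq_newton hv hp hbeta v_pi hm hroot hmax hd near hG_le) hd /newton.
have Qm_neq0 : (p ^ 2)%:R ^+ m != 0 :> R by rewrite expf_neq0 // pnatr_eq0 -lt0n expn_gt0 p_gt0.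
by rewrite -EFinB -EFinM addrC addKr mulrC mulKf.
Qed.
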